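(* Let $H:[0,1]\times\mathbb R\to\mathbb R$ be continuous, coercive in $p$, and quasiconvex in $p$ with $\mathrm{Int}\{p: H(s,p)\le b\}=\{p:H(s,p)<b\}$ for all $s\in[0,1]$, $b\in\mathbb R$. Set $a_H=\max_{s\in[0,1]}\min_{p\in\mathbb R}H(s,p)$. Let $a\ge a_H$, and if $a=a_H$ assume in addition that $s\mapsto \min_p H(s,p)$ is constant on $[0,1]$. For $s\in[0,1]$ put $\sigma^+_a(s)=\max\{p: H(s,p)=a\}$ and $\sigma^-_a(s)=\min\{p:H(s,p)=a\}$. Let $\alpha,\beta\in\mathbb R$ satisfy $$\int_0^1\sigma^-_a(t)\,dt\le \beta-\alpha\le\int_0^1\sigma^+_a(t)\,dt .$$ Then the function $$w(s)=\min\Big\{\alpha+\int_0^s\sigma^+_a(t)\,dt,\ \beta-\int_s^1\sigma^-_a(t)\,dt\Big\},\qquad s\in[0,1],$$ is the unique function, continuous on $[0,1]$, which is a viscosity solution of $H(s,u'(s))=a$ in $(0,1)$ and satisfies $u(0)=\alpha$, $u(1)=\beta$.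
   Context: Coercive in $p$ means $H(s,p)\to+\infty$ as $|p|\to\infty$, uniformly in $s\in[0,1]$; quasiconvex in $p$ means that all sublevel sets $\{p:H(s,p)\le b\}$ are convex. Solutions are understood in the viscosity sense. *)

From Stdlib Require Import Reals Lra ClassicalEpsilon Rtopology.
Open Scope R_scope.

(* Total Riemann integral: RiemannInt of an (arbitrarily chosen) integrability
   proof when f is Riemann integrable on [a,b], and 0 otherwise.
   RiemannInt does not depend on the chosen proof (RiemannInt_P5). *)
Definition Rint (f : R -> R) (a b : R) : R :=
  match excluded_middle_informative (inhabited (Riemann_integrable f a b)) with
  | left h => RiemannInt (epsilon h (fun _ => True))
  | right _ => 0
  end.

Definition cont_on_strip (H : R -> R -> R) : Prop :=
  forall s p, 0 <= s <= 1 -> forall eps, 0 < eps -> exists del, 0 < del /\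
    forall s' p', 0 <= s' <= 1 -> Rabs (s' - s) < del -> Rabs (p' - p) < del ->
      Rabs (H s' p' - H s p) < eps.

Definition coercive (H : R -> R -> R) : Prop :=
  forall M, exists K, forall s p, 0 <= s <= 1 -> K < Rabs p -> M < H s p.

Definition quasiconvex (H : R -> R -> R) : Prop :=
  forall s b p q t, 0 <= s <= 1 -> H s p <= b -> H s q <= b -> 0 <= t <= 1 ->
    H s (t * p + (1 - t) * q) <= b.

Definition is_min_value (f : R -> R) (m : R) : Prop :=
  (exists p, f p = m) /\ forall p, m <= f p.

Definition is_max_on01 (g : R -> R) (M : R) : Prop :=
  (exists s, 0 <= s <= 1 /\ g s = M) /\ forall s, 0 <= s <= 1 -> g s <= M.

Definition is_max_of (A : R -> Prop) (x : R) : Prop := A x /\ forall y, A y -> y <= x.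
Definition is_min_of (A : R -> Prop) (x : R) : Prop := A x /\ forall y, A y -> x <= y.

Definition cont_on01 (u : R -> R) : Prop :=
  forall x, 0 <= x <= 1 -> forall eps, 0 < eps -> exists del, 0 < del /\
    forall y, 0 <= y <= 1 -> Rabs (y - x) < del -> Rabs (u y - u x) < eps.

Definition C1 (phi dphi : R -> R) : Prop :=
  (forall x, derivable_pt_lim phi x (dphi x)) /\ continuity dphi.

Definition loc_max01 (u phi : R -> R) (x : R) : Prop :=
  exists del, 0 < del /\ forall y, 0 < y < 1 -> Rabs (y - x) < del ->
    u y - phi y <= u x - phi x.
Definition loc_min01 (u phi : R -> R) (x : R) : Prop :=
  exists del, 0 < del /\ forall y, 0 < y < 1 -> Rabs (y - x) < del ->
    u x - phi x <= u y - phi y.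

Definition visc_sub (H : R -> R -> R) (a : R) (u : R -> R) : Prop :=
  forall x phi dphi, 0 < x < 1 -> C1 phi dphi -> loc_max01 u phi x ->
    H x (dphi x) <= a.
Definition visc_super (H : R -> R -> R) (a : R) (u : R -> R) : Prop :=
  forall x phi dphi, 0 < x < 1 -> C1 phi dphi -> loc_min01 u phi x ->
    a <= H x (dphi x).
Definition visc_sol (H : R -> R -> R) (a : R) (u : R -> R) : Prop :=
  (forall x, 0 < x < 1 -> continuity_pt u x) /\ visc_sub H a u /\ visc_super H a u.

(* Under the hypotheses, {p | H s p <= a} is the interval [sigm s, sigp s] and
   {p | H s p < a} its interior; quasiconvexity and continuity of H make sigm and
   sigp continuous.  So f = alpha + int_0^s sigp and g = beta - int_s^1 sigm are
   C^1 with f' = sigp, g' = sigm, f - g nondecreasing, and w = min f g.  A test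
   function touching w from above is squeezed between the one-sided slopes of g
   (to the right) and f (to the left); one touching from below touches f or g,
   so its slope is sigp or sigm and H = a there.
   Uniqueness: a subsolution u has u - f nonincreasing and u - g nondecreasing,
   whence u <= w.  If u s < w s, the smooth minimum g + smin e (f - g) of f and g
   touches u from below at an interior point with slope strictly between sigm
   and sigp, contradicting the supersolution inequality; in the degenerate case
   sigm = sigp (forced when a = aH) one concludes instead from u - g being
   nonincreasing. *)

From Pilot Require Import Defs.
From Stdlib Require Import Reals Lra Rtopology ClassicalEpsilon.
From Coquelicot Require Import Coquelicot.
Open Scope R_scope.

Ltac unfold_Rabs := unfold Rabs in *; repeat match goal with
  | |- context [Rcase_abs ?t] => destruct (Rcase_abs t)
  | H : context [Rcase_abs ?t] |- _ => destruct (Rcase_abs t) end.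

Ltac unfold_Rmin_Rmax := unfold Rmin, Rmax in *; repeat match goal with
  | |- context [Rle_dec ?x ?y] => destruct (Rle_dec x y)
  | H : context [Rle_dec ?x ?y] |- _ => destruct (Rle_dec x y) end.

Lemma continuity_pt_eps (f : R -> R) x : continuity_pt f x <->
  forall eps, 0 < eps -> exists del, 0 < del /\
    forall y, Rabs (y - x) < del -> Rabs (f y - f x) < eps.
Proof.
  split; intros Hf eps Heps; destruct (Hf eps Heps) as [d [Hd Hy]];
    exists d; split; try lra.
  - intros y Hyd. destruct (Req_dec x y) as [<- | Hne].
    + rewrite !Rminus_diag, Rabs_R0; lra.
    + apply Hy. repeat split; auto.
  - intros y [_ Hyd]. exact (Hy y Hyd).
Qed.

Lemma cont_on01_minus u f : cont_on01 u -> continuity f ->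
  cont_on01 (fun x => u x - f x).
Proof.
  intros Hu Hf x Hx eps Heps.
  destruct (Hu x Hx (eps / 2) ltac:(lra)) as [d1 [Hd1 H1]].
  destruct (proj1 (continuity_pt_eps f x) (Hf x) (eps / 2) ltac:(lra)) as [d2 [Hd2 H2]].
  exists (Rmin d1 d2); split; [now apply Rmin_pos|].
  intros y Hy Hyx. specialize (H1 y Hy). specialize (H2 y).
  assert (Hyx1 : Rabs (y - x) < d1) by (pose proof (Rmin_l d1 d2); lra).
  assert (Hyx2 : Rabs (y - x) < d2) by (pose proof (Rmin_r d1 d2); lra).
  specialize (H1 Hyx1). specialize (H2 Hyx2). unfold_Rabs; lra.
Qed.

Lemma cont_on01_of_continuity u v : continuity v ->
  (forall x, 0 <= x <= 1 -> u x = v x) -> cont_on01 u.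
Proof.
  intros Hv Huv x Hx eps Heps.
  destruct (proj1 (continuity_pt_eps v x) (Hv x) eps Heps) as [d [Hd Hy]].
  exists d; split; [exact Hd|]. intros y Hy01 Hyx.
  rewrite !Huv by assumption. now apply Hy.
Qed.

Lemma continuity_Rmin f g : continuity f -> continuity g ->
  continuity (fun x => Rmin (f x) (g x)).
Proof.
  intros Hf Hg x. apply continuity_pt_eps. intros eps Heps.
  destruct (proj1 (continuity_pt_eps f x) (Hf x) eps Heps) as [d1 [Hd1 H1]].
  destruct (proj1 (continuity_pt_eps g x) (Hg x) eps Heps) as [d2 [Hd2 H2]].
  exists (Rmin d1 d2); split; [now apply Rmin_pos|]. intros y Hy.
  specialize (H1 y ltac:(pose proof (Rmin_l d1 d2); lra)).
  specialize (H2 y ltac:(pose proof (Rmin_r d1 d2); lra)).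
  unfold_Rmin_Rmax; unfold_Rabs; lra.
Qed.

Definition clamp01 (x : R) : R := Rmax 0 (Rmin 1 x).
Definition ext01 (f : R -> R) (x : R) : R := f (clamp01 x).

Lemma clamp01_in x : 0 <= clamp01 x <= 1.
Proof. unfold clamp01; unfold_Rmin_Rmax; lra. Qed.

Lemma ext01_eq f x : 0 <= x <= 1 -> ext01 f x = f x.
Proof. intros; unfold ext01, clamp01; f_equal; unfold_Rmin_Rmax; lra. Qed.

Lemma continuity_ext01 f : cont_on01 f -> continuity (ext01 f).
Proof.
  intros Hf x. apply continuity_pt_eps. intros eps Heps.
  destruct (Hf (clamp01 x) (clamp01_in x) eps Heps) as [d [Hd Hy]].
  exists d; split; [exact Hd|]. intros y Hyx. apply Hy; [apply clamp01_in|].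
  unfold clamp01; unfold_Rmin_Rmax; unfold_Rabs; lra.
Qed.

Lemma cont_on01_argmax f l r : cont_on01 f -> 0 <= l -> l <= r -> r <= 1 ->
  exists t, l <= t <= r /\ forall y, l <= y <= r -> f y <= f t.
Proof.
  intros Hf Hl Hlr Hr.
  destruct (continuity_ab_maj (ext01 f) l r Hlr (fun c _ => continuity_ext01 f Hf c))
    as [t [Ht Htlr]].
  exists t; split; [exact Htlr|]. intros y Hy. specialize (Ht y Hy).
  rewrite !ext01_eq in Ht by lra. exact Ht.
Qed.

Lemma cont_on01_argmin f l r : cont_on01 f -> 0 <= l -> l <= r -> r <= 1 ->
  exists t, l <= t <= r /\ forall y, l <= y <= r -> f t <= f y.
Proof.
  intros Hf Hl Hlr Hr.
  destruct (continuity_ab_min (ext01 f) l r Hlr (fun c _ => continuity_ext01 f Hf c))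
    as [t [Ht Htlr]].
  exists t; split; [exact Htlr|]. intros y Hy. specialize (Ht y Hy).
  rewrite !ext01_eq in Ht by lra. exact Ht.
Qed.

Lemma deriv_nonpos_of_right_max g x k del : derivable_pt_lim g x k -> 0 < del ->
  (forall y, x < y < x + del -> g y <= g x) -> k <= 0.
Proof.
  intros Hd Hdel Hy. destruct (Rle_dec k 0) as [|Hk]; [lra|]. exfalso.
  destruct (Hd (k / 2) ltac:(lra)) as [[d Hd0] Hh]. simpl in Hh.
  set (h := Rmin d del / 2).
  assert (Hh0 : 0 < h) by (unfold h; unfold_Rmin_Rmax; lra).
  assert (Hhd : h < d) by (unfold h; unfold_Rmin_Rmax; lra).
  assert (Hhdel : h < del) by (unfold h; unfold_Rmin_Rmax; lra).
  specialize (Hh h ltac:(lra) ltac:(rewrite Rabs_pos_eq; lra)).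
  specialize (Hy (x + h) ltac:(lra)).
  assert ((g (x + h) - g x) / h <= 0).
  { apply Rmult_le_0_r; [lra|]. left; apply Rinv_0_lt_compat; lra. }
  unfold_Rabs; lra.
Qed.

Lemma deriv_nonneg_of_left_max g x k del : derivable_pt_lim g x k -> 0 < del ->
  (forall y, x - del < y < x -> g y <= g x) -> 0 <= k.
Proof.
  intros Hd Hdel Hy.
  assert (Hm : derivable_pt_lim (mirr_fct g) (- x) (- k)).
  { apply derivable_pt_lim_mirr_fwd. now rewrite !Ropp_involutive. }
  enough (- k <= 0) by lra.
  apply (deriv_nonpos_of_right_max _ _ _ del Hm Hdel).
  intros y Hyx. unfold mirr_fct. rewrite Ropp_involutive. apply Hy; lra.
Qed.

Section Touching.

Variables (u phi v : R -> R) (x dphi dv : R).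
Hypotheses (Hx : 0 < x < 1) (Hphi : derivable_pt_lim phi x dphi)
  (Hv : derivable_pt_lim v x dv) (Hvx : v x = u x).

Lemma slope_le_of_loc_max_right : loc_max01 u phi x ->
  (forall y, x < y < 1 -> v y <= u y) -> dv <= dphi.
Proof.
  intros [del [Hdel Hloc]] Hvu.
  enough (dv - dphi <= 0) by lra.
  apply (deriv_nonpos_of_right_max (fun y => v y - phi y) x _ (Rmin del (1 - x))).
  - exact (derivable_pt_lim_minus v phi x dv dphi Hv Hphi).
  - apply Rmin_pos; lra.
  - intros y Hy. pose proof (Rmin_l del (1 - x)). pose proof (Rmin_r del (1 - x)).
    specialize (Hloc y ltac:(lra) ltac:(unfold_Rabs; lra)).
    specialize (Hvu y ltac:(lra)). lra.
Qed.

Lemma slope_ge_of_loc_max_left : loc_max01 u phi x ->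
  (forall y, 0 < y < x -> v y <= u y) -> dphi <= dv.
Proof.
  intros [del [Hdel Hloc]] Hvu.
  enough (0 <= dv - dphi) by lra.
  apply (deriv_nonneg_of_left_max (fun y => v y - phi y) x _ (Rmin del x)).
  - exact (derivable_pt_lim_minus v phi x dv dphi Hv Hphi).
  - apply Rmin_pos; lra.
  - intros y Hy. pose proof (Rmin_l del x). pose proof (Rmin_r del x).
    specialize (Hloc y ltac:(lra) ltac:(unfold_Rabs; lra)).
    specialize (Hvu y ltac:(lra)). lra.
Qed.

End Touching.

Lemma slope_eq_of_loc_min u phi v x dphi dv : 0 < x < 1 ->
  derivable_pt_lim phi x dphi -> derivable_pt_lim v x dv -> v x = u x ->
  loc_min01 u phi x -> (forall y, 0 < y < 1 -> u y <= v y) -> dphi = dv.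
Proof.
  intros Hx Hphi Hv Hvx [del [Hdel Hloc]] Hvu.
  assert (Hmax : loc_max01 (fun y => - u y) (fun y => - phi y) x).
  { exists del; split; [exact Hdel|]. intros y Hy Hyx. specialize (Hloc y Hy Hyx). lra. }
  pose proof (derivable_pt_lim_opp _ _ _ Hphi) as Hphi'.
  pose proof (derivable_pt_lim_opp _ _ _ Hv) as Hv'.
  assert (Hvx' : - v x = - u x) by lra.
  assert (Hvu' : forall y, 0 < y < 1 -> - v y <= - u y)
    by (intros y Hy; specialize (Hvu y Hy); lra).
  pose proof (slope_le_of_loc_max_right (fun y => - u y) (fun y => - phi y) (fun y => - v y)
    x (- dphi) (- dv) Hx Hphi' Hv' Hvx' Hmax ltac:(intros y Hy; apply Hvu'; lra)).
  pose proof (slope_ge_of_loc_max_left (fun y => - u y) (fun y => - phi y) (fun y => - v y)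
    x (- dphi) (- dv) Hx Hphi' Hv' Hvx' Hmax ltac:(intros y Hy; apply Hvu'; lra)).
  lra.
Qed.

Lemma visc_sub_shift H a G b u f df : visc_sub H a u -> Defs.C1 f df ->
  (forall x p, 0 < x < 1 -> H x (p + df x) <= a -> G x p <= b) ->
  visc_sub G b (fun x => u x - f x).
Proof.
  intros Hu [Hf Hdf] HG x psi dpsi Hx [Hpsi Hdpsi] [d [Hd Hloc]].
  apply HG; [exact Hx|].
  apply (Hu x (fun y => psi y + f y) (fun y => dpsi y + df y) Hx).
  - split; intro y; [apply derivable_pt_lim_plus | apply continuity_pt_plus]; auto.
  - exists d; split; [exact Hd|]. intros y Hy Hyx. specialize (Hloc y Hy Hyx). lra.
Qed.

Lemma derivable_pt_lim_of_quadratic_bound f t D :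
  (forall h, Rabs (f (t + h) - f t - D * h) <= h * h) -> derivable_pt_lim f t D.
Proof.
  intros Hb eps Heps. exists (mkposreal eps Heps). intros h Hh0 Hh. simpl in Hh.
  replace ((f (t + h) - f t) / h - D) with ((f (t + h) - f t - D * h) / h) by (field; lra).
  unfold Rdiv. rewrite Rabs_mult, Rabs_inv.
  assert (0 < Rabs h) by (apply Rabs_pos_lt; exact Hh0).
  apply Rle_lt_trans with (Rabs h); [|exact Hh].
  apply Rmult_le_reg_r with (Rabs h); [lra|].
  rewrite Rmult_assoc, Rinv_l, Rmult_1_r by lra.
  rewrite <- Rabs_mult, (Rabs_pos_eq (h * h)) by nra. apply Hb.
Qed.

Definition hinge_sq (m t : R) : R := Rmax 0 (t - m) * Rmax 0 (t - m).

Lemma derivable_pt_lim_hinge_sq m t :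
  derivable_pt_lim (hinge_sq m) t (2 * Rmax 0 (t - m)).
Proof.
  apply derivable_pt_lim_of_quadratic_bound. intros h. unfold hinge_sq.
  replace (t + h - m) with ((t - m) + h) by ring. generalize (t - m); intro z.
  unfold_Rmin_Rmax; unfold_Rabs; nra.
Qed.

Lemma continuity_hinge m : continuity (fun t => Rmax 0 (t - m)).
Proof.
  intro x. apply continuity_pt_eps. intros eps Heps. exists eps; split; [exact Heps|].
  intros y Hy. unfold_Rmin_Rmax; unfold_Rabs; lra.
Qed.

(* The penalty [K * hinge_sq x2] keeps the maximum of [v - psi] on [x, x3] away
   from [x3], the gain [v x2 - v x] away from [x]; at the interior maximum the
   slope of [psi] is at least [c > 0]. *)
Lemma visc_sub_slope_no_rise v x x2 : cont_on01 v -> visc_sub (fun _ p => p) 0 v ->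
  0 <= x < x2 -> x2 < 1 -> v x2 <= v x.
Proof.
  intros Hv Hsub Hxx2 Hx21. destruct (Rle_dec (v x2) (v x)) as [|Hlt]; [lra|]. exfalso.
  set (x3 := (x2 + 1) / 2).
  set (c := (v x2 - v x) / (2 * (x2 - x))).
  set (K := (Rabs (v x3 - v x2) + 1) / ((x3 - x2) * (x3 - x2))).
  assert (Hc : 0 < c) by (apply Rdiv_lt_0_compat; lra).
  assert (HK : 0 < K).
  { apply Rdiv_lt_0_compat; [pose proof (Rabs_pos (v x3 - v x2)); lra|unfold x3; nra]. }
  set (psi := fun s => c * s + K * hinge_sq x2 s).
  set (dpsi := fun s => c + K * (2 * Rmax 0 (s - x2))).
  assert (Hpsi : Defs.C1 psi dpsi).
  { split.
    - intro s. apply derivable_pt_lim_plus.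
      + pose proof (derivable_pt_lim_scal id c s 1 (derivable_pt_lim_id s)) as E.
        rewrite Rmult_1_r in E. exact E.
      + apply derivable_pt_lim_scal, derivable_pt_lim_hinge_sq.
    - intro s. apply continuity_pt_plus; [apply continuity_pt_const; now intros ? ?|].
      apply continuity_pt_scal, continuity_pt_scal, continuity_hinge. }
  assert (Hcont : cont_on01 (fun s => v s - psi s)).
  { apply cont_on01_minus; [exact Hv|]. intro s. apply derivable_continuous_pt.
    exists (dpsi s). apply (proj1 Hpsi). }
  destruct (cont_on01_argmax _ x x3 Hcont ltac:(lra) ltac:(unfold x3; lra) ltac:(unfold x3; lra))
    as [t [Ht Hmax]].
  assert (Hleft : v x - psi x < v x2 - psi x2).
  { unfold psi, hinge_sq. rewrite !(Rmax_left 0) by lra.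
    assert (c * (x2 - x) = (v x2 - v x) / 2) by (unfold c; field; lra). nra. }
  assert (Hright : v x3 - psi x3 < v x2 - psi x2).
  { unfold psi, hinge_sq.
    rewrite (Rmax_left 0 (x2 - x2)), (Rmax_right 0 (x3 - x2)) by (unfold x3; lra).
    assert (E : K * ((x3 - x2) * (x3 - x2)) = Rabs (v x3 - v x2) + 1).
    { unfold K. field. unfold x3; lra. }
    assert (x2 < x3) by (unfold x3; lra). unfold_Rabs; nra. }
  assert (Hx2t := Hmax x2 ltac:(unfold x3; lra)).
  assert (Htx : x < t) by (destruct (Req_dec t x) as [->|]; lra).
  assert (Htx3 : t < x3) by (destruct (Req_dec t x3) as [->|]; lra).
  assert (Hloc : loc_max01 v psi t).
  { exists (Rmin (t - x) (x3 - t)); split; [apply Rmin_pos; lra|].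
    intros z Hz Hzt. apply Hmax. unfold_Rmin_Rmax; unfold_Rabs; lra. }
  specialize (Hsub t psi dpsi ltac:(unfold x3 in *; lra) Hpsi Hloc). unfold dpsi in Hsub.
  pose proof (Rmax_l 0 (t - x2)). nra.
Qed.

Lemma nonincreasing_of_visc_sub v : cont_on01 v -> visc_sub (fun _ p => p) 0 v ->
  forall x y, 0 <= x -> x <= y -> y <= 1 -> v y <= v x.
Proof.
  intros Hv Hsub x y Hx Hxy Hy.
  destruct (Req_dec x y) as [<-|Hne]; [lra|].
  destruct (Req_dec y 1) as [->|Hy1]; [|apply visc_sub_slope_no_rise; auto; lra].
  destruct (Rle_dec (v 1) (v x)) as [|Hlt]; [lra|]. exfalso.
  destruct (Hv 1 ltac:(lra) (v 1 - v x) ltac:(lra)) as [d [Hd Hnear]].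
  set (z := Rmax ((x + 1) / 2) (1 - d / 2)).
  assert (Hz : (x + 1) / 2 <= z /\ 1 - d / 2 <= z /\ z < 1)
    by (unfold z; unfold_Rmin_Rmax; lra).
  specialize (Hnear z ltac:(lra) ltac:(unfold_Rabs; lra)).
  pose proof (visc_sub_slope_no_rise v x z Hv Hsub ltac:(lra) ltac:(lra)).
  unfold_Rabs; lra.
Qed.

Lemma derivable_pt_lim_reflect01 f x l : derivable_pt_lim f (1 - x) l ->
  derivable_pt_lim (fun y => f (1 - y)) x (- l).
Proof.
  intros Hf.
  assert (Hr : derivable_pt_lim (fun y => 1 - y) x (0 - 1))
    by exact (derivable_pt_lim_minus _ _ x 0 1 (derivable_pt_lim_const 1 x)
                (derivable_pt_lim_id x)).
  replace (- l) with (l * (0 - 1)) by ring.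
  exact (derivable_pt_lim_comp (fun y => 1 - y) f x (0 - 1) l Hr Hf).
Qed.

Lemma visc_sub_reflect01 v : visc_sub (fun _ p => - p) 0 v ->
  visc_sub (fun _ p => p) 0 (fun y => v (1 - y)).
Proof.
  intros Hsub t psi dpsi Ht [Hpsi Hdpsi] [d [Hd Hloc]].
  assert (Hpsi' : Defs.C1 (fun y => psi (1 - y)) (fun y => - dpsi (1 - y))).
  { split; intro y.
    - apply derivable_pt_lim_reflect01, Hpsi.
    - apply continuity_pt_opp. apply (continuity_pt_comp (fun y => 1 - y) dpsi); [|apply Hdpsi].
      apply continuity_pt_minus; [|apply continuity_pt_id].
      apply continuity_pt_const. now intros ? ?. }
  assert (Hloc' : loc_max01 v (fun y => psi (1 - y)) (1 - t)).
  { exists d; split; [exact Hd|]. intros y Hy Hyt.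
    specialize (Hloc (1 - y) ltac:(lra) ltac:(unfold_Rabs; lra)).
    replace (1 - (1 - y)) with y in Hloc by ring.
    replace (1 - (1 - t)) with t by ring. exact Hloc. }
  specialize (Hsub (1 - t) _ _ ltac:(lra) Hpsi' Hloc'). simpl in Hsub.
  replace (1 - (1 - t)) with t in Hsub by ring. lra.
Qed.

Lemma nondecreasing_of_visc_sub v : cont_on01 v -> visc_sub (fun _ p => - p) 0 v ->
  forall x y, 0 <= x -> x <= y -> y <= 1 -> v x <= v y.
Proof.
  intros Hv Hsub x y Hx Hxy Hy.
  assert (Hv' : cont_on01 (fun y => v (1 - y))).
  { intros z Hz eps Heps. destruct (Hv (1 - z) ltac:(lra) eps Heps) as [d [Hd Hnear]].
    exists d; split; [exact Hd|]. intros y' Hy' Hyz. apply Hnear; [lra|].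
    replace (1 - y' - (1 - z)) with (- (y' - z)) by ring. now rewrite Rabs_Ropp. }
  pose proof (nonincreasing_of_visc_sub _ Hv' (visc_sub_reflect01 v Hsub) (1 - y) (1 - x)
    ltac:(lra) ltac:(lra) ltac:(lra)) as E.
  simpl in E. replace (1 - (1 - x)) with x in E by ring.
  replace (1 - (1 - y)) with y in E by ring. exact E.
Qed.

Definition smin (e z : R) : R := (z - sqrt (z * z + e * e)) / 2.
Definition smin' (e z : R) : R := (1 - z / sqrt (z * z + e * e)) / 2.

Lemma sqrt_sq_plus_sq_bounds e z : 0 < e ->
  Rabs z < sqrt (z * z + e * e) <= Rabs z + e.
Proof.
  intros He. assert (Hz : Rabs z * Rabs z = z * z) by (unfold_Rabs; nra).
  pose proof (Rabs_pos z). split.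
  - rewrite <- (sqrt_square (Rabs z)) by lra. apply sqrt_lt_1_alt. nra.
  - rewrite <- (sqrt_square (Rabs z + e)) by lra. apply sqrt_le_1_alt. nra.
Qed.

Section SmoothMin.

Variable e : R.
Hypothesis He : 0 < e.

Lemma smin_le_Rmin z : smin e z <= Rmin z 0.
Proof.
  pose proof (sqrt_sq_plus_sq_bounds e z He). unfold smin. unfold_Rmin_Rmax; unfold_Rabs; lra.
Qed.

Lemma Rmin_le_smin z : Rmin z 0 - e / 2 <= smin e z.
Proof.
  pose proof (sqrt_sq_plus_sq_bounds e z He). unfold smin. unfold_Rmin_Rmax; unfold_Rabs; lra.
Qed.

Lemma smin'_bounds z : 0 < smin' e z < 1.
Proof.
  pose proof (sqrt_sq_plus_sq_bounds e z He) as [Hlt _].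
  set (S := sqrt (z * z + e * e)) in *.
  assert (HS : 0 < S) by (pose proof (Rabs_pos z); lra).
  assert (Hk : -1 < z / S < 1).
  { split; [apply Rmult_lt_reg_r with S|apply Rmult_lt_reg_r with S]; try exact HS;
      unfold Rdiv; rewrite Rmult_assoc, Rinv_l, Rmult_1_r by lra; unfold_Rabs; lra. }
  unfold smin'. fold S. lra.
Qed.

Lemma derivable_pt_lim_smin z : derivable_pt_lim (smin e) z (smin' e z).
Proof.
  pose proof (sqrt_sq_plus_sq_bounds e z He). pose proof (Rabs_pos z).
  apply is_derive_Reals. unfold smin, smin'. auto_derive; [nra|field; lra].
Qed.

Lemma continuity_smin' : continuity (smin' e).
Proof.
  intro z. pose proof (sqrt_sq_plus_sq_bounds e z He). pose proof (Rabs_pos z).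
  apply continuity_pt_filterlim, (ex_derive_continuous (V := R_NormedModule)).
  unfold smin'. auto_derive. repeat split; nra.
Qed.

End SmoothMin.

Lemma derivable_pt_lim_const_plus c f x l : derivable_pt_lim f x l ->
  derivable_pt_lim (fun y => c + f y) x l.
Proof.
  intros Hf. rewrite <- (Rplus_0_l l).
  exact (derivable_pt_lim_plus _ f x 0 l (derivable_pt_lim_const c x) Hf).
Qed.

Lemma continuity_of_derivable_pt_lim f df : (forall x, derivable_pt_lim f x (df x)) ->
  continuity f.
Proof. intros Hf x. apply derivable_continuous_pt. exists (df x). apply Hf. Qed.

Section MinOfBarriers.

Variables (H : R -> R -> R) (a : R) (lo hi f g : R -> R).
Hypotheses (Hf : forall x, derivable_pt_lim f x (hi x))
  (Hg : forall x, derivable_pt_lim g x (lo x))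
  (Hle : forall x p, 0 < x < 1 -> (H x p <= a <-> lo x <= p <= hi x))
  (Hlt : forall x p, 0 < x < 1 -> (H x p < a <-> lo x < p < hi x)).

Notation w := (fun s => Rmin (f s) (g s)).

Lemma min_barriers_visc_sub : (forall x y, x <= y -> g y - g x <= f y - f x) ->
  visc_sub H a w.
Proof.
  intros Hgap x phi dphi Hx [Hphi _] Hloc. apply Hle; [exact Hx|].
  pose proof (Rmin_l (f x) (g x)). pose proof (Rmin_r (f x) (g x)). split.
  - apply (slope_le_of_loc_max_right w phi (fun y => (w x - g x) + g y) x (dphi x) (lo x)
      Hx (Hphi x) (derivable_pt_lim_const_plus _ _ _ _ (Hg x)) ltac:(simpl; ring) Hloc).
    intros y Hy. pose proof (Hgap x y ltac:(lra)). simpl. apply Rmin_glb; lra.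
  - apply (slope_ge_of_loc_max_left w phi (fun y => (w x - f x) + f y) x (dphi x) (hi x)
      Hx (Hphi x) (derivable_pt_lim_const_plus _ _ _ _ (Hf x)) ltac:(simpl; ring) Hloc).
    intros y Hy. pose proof (Hgap y x ltac:(lra)). simpl. apply Rmin_glb; lra.
Qed.

Lemma min_barriers_visc_super : visc_super H a w.
Proof.
  intros x phi dphi Hx [Hphi _] Hloc.
  destruct (Rlt_le_dec (H x (dphi x)) a) as [Hlow|]; [|assumption]. exfalso.
  apply Hlt in Hlow; [|exact Hx].
  destruct (Rle_dec (f x) (g x)).
  - pose proof (slope_eq_of_loc_min w phi f x _ _ Hx (Hphi x) (Hf x)
      ltac:(simpl; rewrite Rmin_left; lra) Hloc (fun y _ => Rmin_l _ _)). lra.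
  - pose proof (slope_eq_of_loc_min w phi g x _ _ Hx (Hphi x) (Hg x)
      ltac:(simpl; rewrite Rmin_right; lra) Hloc (fun y _ => Rmin_r _ _)). lra.
Qed.

Lemma min_barriers_visc_sol : (forall x y, x <= y -> g y - g x <= f y - f x) ->
  visc_sol H a w.
Proof.
  intros Hgap. split; [|split].
  - intros x _. apply continuity_Rmin; eapply continuity_of_derivable_pt_lim; eauto.
  - exact (min_barriers_visc_sub Hgap).
  - exact min_barriers_visc_super.
Qed.

Hypotheses (Hlo : continuity lo) (Hhi : continuity hi).

Lemma visc_sub_le_min_barriers u : cont_on01 u -> visc_sub H a u ->
  u 0 <= f 0 -> u 1 <= g 1 -> forall s, 0 <= s <= 1 -> u s <= w s.
Proof.
  intros Hu Hsub Hu0 Hu1 s Hs.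
  assert (Hdec : visc_sub (fun _ p => p) 0 (fun x => u x - f x)).
  { apply (visc_sub_shift H a _ _ u f hi Hsub (conj Hf Hhi)).
    intros x p Hx Hp. apply Hle in Hp; lra. }
  assert (Hinc : visc_sub (fun _ p => - p) 0 (fun x => u x - g x)).
  { apply (visc_sub_shift H a _ _ u g lo Hsub (conj Hg Hlo)).
    intros x p Hx Hp. apply Hle in Hp; lra. }
  pose proof (nonincreasing_of_visc_sub _
    (cont_on01_minus u f Hu (continuity_of_derivable_pt_lim f hi Hf)) Hdec 0 s
    ltac:(lra) ltac:(lra) ltac:(lra)).
  pose proof (nondecreasing_of_visc_sub _
    (cont_on01_minus u g Hu (continuity_of_derivable_pt_lim g lo Hg)) Hinc s 1
    ltac:(lra) ltac:(lra) ltac:(lra)).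
  apply Rmin_glb; lra.
Qed.

Lemma visc_sub_ge_min_barriers_degenerate u : (forall x, 0 < x < 1 -> lo x = hi x) ->
  cont_on01 u -> visc_sub H a u -> g 1 <= u 1 -> forall s, 0 <= s <= 1 -> w s <= u s.
Proof.
  intros Heq Hu Hsub Hu1 s Hs.
  assert (Hdec : visc_sub (fun _ p => p) 0 (fun x => u x - g x)).
  { apply (visc_sub_shift H a _ _ u g lo Hsub (conj Hg Hlo)).
    intros x p Hx Hp. apply Hle in Hp; [|exact Hx]. rewrite (Heq x Hx) in Hp. lra. }
  pose proof (nonincreasing_of_visc_sub _
    (cont_on01_minus u g Hu (continuity_of_derivable_pt_lim g lo Hg)) Hdec s 1
    ltac:(lra) ltac:(lra) ltac:(lra)).
  pose proof (Rmin_r (f s) (g s)). simpl. lra.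
Qed.

(* The test function [g + smin e (f - g)] lies below [w] and within [e / 2] of
   it, and its slope is a strict convex combination of [lo] and [hi]. *)
Lemma visc_super_ge_min_barriers u : (forall x, 0 < x < 1 -> lo x < hi x) ->
  cont_on01 u -> visc_super H a u -> w 0 <= u 0 -> w 1 <= u 1 ->
  forall s, 0 <= s <= 1 -> w s <= u s.
Proof.
  intros Hstrict Hu Hsup Hu0 Hu1 s Hs.
  destruct (Rle_dec (w s) (u s)) as [|Hgt]; [assumption|]. exfalso.
  set (e := w s - u s). assert (He : 0 < e) by (unfold e; lra).
  set (psi := fun y => g y + smin e (f y - g y)).
  set (dpsi := fun y => lo y + smin' e (f y - g y) * (hi y - lo y)).
  assert (Hpsi : Defs.C1 psi dpsi).
  { split; intro y.
    - apply derivable_pt_lim_plus; [apply Hg|].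
      exact (derivable_pt_lim_comp (fun y => f y - g y) (smin e) y _ _
        (derivable_pt_lim_minus f g y _ _ (Hf y) (Hg y)) (derivable_pt_lim_smin e He _)).
    - assert (Hfg : continuity (fun y => f y - g y)).
      { apply continuity_minus; eapply continuity_of_derivable_pt_lim; eauto. }
      apply continuity_pt_plus; [apply Hlo|]. apply continuity_pt_mult.
      + apply (continuity_pt_comp (fun y => f y - g y)); [apply Hfg|apply continuity_smin', He].
      + apply continuity_pt_minus; auto. }
  assert (Hbelow : forall y, psi y <= w y).
  { intro y. pose proof (smin_le_Rmin e He (f y - g y)). unfold psi. simpl.
    unfold_Rmin_Rmax; lra. }
  assert (Hnear : w s - e / 2 <= psi s).
  { pose proof (Rmin_le_smin e He (f s - g s)). unfold psi. simpl.
    unfold_Rmin_Rmax; lra. }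
  assert (Hcont : cont_on01 (fun y => u y - psi y)).
  { apply cont_on01_minus; [exact Hu|]. eapply continuity_of_derivable_pt_lim, Hpsi. }
  destruct (cont_on01_argmin _ 0 1 Hcont ltac:(lra) ltac:(lra) ltac:(lra)) as [t [Ht Hmin]].
  pose proof (Hmin s Hs). pose proof (Hbelow 0). pose proof (Hbelow 1).
  assert (Ht0 : 0 < t) by (destruct (Req_dec t 0) as [->|]; unfold e in *; lra).
  assert (Ht1 : t < 1) by (destruct (Req_dec t 1) as [->|]; unfold e in *; lra).
  assert (Hloc : loc_min01 u psi t).
  { exists 1; split; [lra|]. intros y Hy _. apply Hmin. lra. }
  specialize (Hsup t psi dpsi ltac:(lra) Hpsi Hloc).
  assert (Hslope : lo t < dpsi t < hi t).
  { pose proof (smin'_bounds e He (f t - g t)). specialize (Hstrict t ltac:(lra)).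
    unfold dpsi. split; nra. }
  apply Hlt in Hslope; [lra|lra].
Qed.

Lemma visc_sol_eq_min_barriers u :
  (forall x, 0 < x < 1 -> lo x < hi x) \/ (forall x, 0 < x < 1 -> lo x = hi x) ->
  cont_on01 u -> visc_sol H a u -> u 0 = f 0 -> u 1 = g 1 ->
  forall s, 0 <= s <= 1 -> u s = w s.
Proof.
  intros Hcase Hu [_ [Hsub Hsup]] Hu0 Hu1 s Hs.
  apply Rle_antisym; [apply (visc_sub_le_min_barriers u); auto; lra|].
  destruct Hcase as [Hstrict|Hdeg].
  - apply (visc_super_ge_min_barriers u); auto; simpl.
    + pose proof (Rmin_l (f 0) (g 0)); lra.
    + pose proof (Rmin_r (f 1) (g 1)); lra.
  - apply (visc_sub_ge_min_barriers_degenerate u); auto; lra.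
Qed.

End MinOfBarriers.

Definition sublevel_interval (H : R -> R -> R) (a : R) (lo hi : R -> R) : Prop :=
  forall s, 0 <= s <= 1 ->
    H s (lo s) = a /\ H s (hi s) = a /\
    (forall p, H s p <= a <-> lo s <= p <= hi s) /\
    (forall p, H s p < a <-> lo s < p < hi s).

Lemma sublevel_interval_lo_le_hi H a lo hi s : sublevel_interval H a lo hi ->
  0 <= s <= 1 -> lo s <= hi s.
Proof.
  intros Hsl Hs. destruct (Hsl s Hs) as [_ [Ehi [Hle _]]].
  pose proof (proj1 (Hle (hi s)) ltac:(lra)). lra.
Qed.

Definition Hrefl (H : R -> R -> R) (s p : R) : R := H s (- p).

Lemma cont_on_strip_refl H : cont_on_strip H -> cont_on_strip (Hrefl H).
Proof.
  intros Hc s p Hs eps Heps. destruct (Hc s (- p) Hs eps Heps) as [d [Hd Hnear]].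
  exists d; split; [exact Hd|]. intros s' p' Hs' Hss Hpp. apply Hnear; auto.
  replace (- p' - - p) with (- (p' - p)) by ring. now rewrite Rabs_Ropp.
Qed.

Lemma coercive_refl H : coercive H -> coercive (Hrefl H).
Proof.
  intros Hco M. destruct (Hco M) as [K HK]. exists K. intros s p Hs Hp.
  apply HK; [exact Hs|]. now rewrite Rabs_Ropp.
Qed.

Lemma quasiconvex_refl H : quasiconvex H -> quasiconvex (Hrefl H).
Proof.
  intros Hq s b p q t Hs Hp Hq' Ht. unfold Hrefl.
  replace (- (t * p + (1 - t) * q)) with (t * - p + (1 - t) * - q) by ring. now apply Hq.
Qed.

Lemma sublevel_interval_refl H a lo hi : sublevel_interval H a lo hi ->
  sublevel_interval (Hrefl H) a (fun s => - hi s) (fun s => - lo s).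
Proof.
  intros Hsl s Hs. destruct (Hsl s Hs) as [Elo [Ehi [Hle Hlt]]]. unfold Hrefl.
  rewrite !Ropp_involutive. do 2 (split; [assumption|]).
  split; intro p; [rewrite Hle|rewrite Hlt]; lra.
Qed.

Lemma quasiconvex_between H s b x y z : quasiconvex H -> 0 <= s <= 1 ->
  H s x <= b -> H s y <= b -> x <= z <= y -> H s z <= b.
Proof.
  intros Hq Hs Hx Hy Hz. destruct (Req_dec x y) as [<-|Hne].
  - replace z with x by lra. exact Hx.
  - set (t := (y - z) / (y - x)).
    replace z with (t * x + (1 - t) * y) by (unfold t; field; lra).
    apply Hq; try assumption. unfold t; split.
    + apply Rdiv_le_0_compat; lra.
    + apply Rmult_le_reg_r with (y - x); [lra|]. unfold Rdiv.
      rewrite Rmult_assoc, Rinv_l by lra. lra.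
Qed.

Lemma cont_on_strip_slice_p H s : cont_on_strip H -> 0 <= s <= 1 -> continuity (H s).
Proof.
  intros Hc Hs p. apply continuity_pt_eps. intros eps Heps.
  destruct (Hc s p Hs eps Heps) as [d [Hd Hnear]]. exists d; split; [exact Hd|].
  intros q Hq. apply Hnear; [exact Hs| |exact Hq]. rewrite Rminus_diag, Rabs_R0; lra.
Qed.

Lemma cont_on_strip_slice_s H p s0 eps : cont_on_strip H -> 0 <= s0 <= 1 -> 0 < eps ->
  exists d, 0 < d /\ forall s, 0 <= s <= 1 -> Rabs (s - s0) < d ->
    Rabs (H s p - H s0 p) < eps.
Proof.
  intros Hc Hs0 Heps. destruct (Hc s0 p Hs0 eps Heps) as [d [Hd Hnear]].
  exists d; split; [exact Hd|]. intros s Hs Hss. apply Hnear; auto.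
  rewrite Rminus_diag, Rabs_R0; lra.
Qed.

Lemma exists_level_above H s a p : cont_on_strip H -> coercive H -> 0 <= s <= 1 ->
  H s p <= a -> exists q, p <= q /\ H s q = a.
Proof.
  intros Hc Hco Hs Hp. destruct (Req_dec (H s p) a) as [E|Ne]; [now exists p; split; [lra|]|].
  destruct (Hco a) as [K HK].
  set (q := Rmax p K + 1).
  assert (Hpq : p < q) by (unfold q; pose proof (Rmax_l p K); lra).
  assert (Hq : a < H s q)
    by (apply HK; [exact Hs|]; unfold q; pose proof (Rmax_r p K); unfold_Rabs; lra).
  destruct (IVT (fun r => H s r - a) p q
    (continuity_minus _ _ (cont_on_strip_slice_p H s Hc Hs)
       (continuity_const (fun _ => a) (fun _ _ => eq_refl)))
    Hpq ltac:(lra) ltac:(lra)) as [z [Hz Ez]].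
  exists z; split; lra.
Qed.

Lemma sublevel_interval_of_level_extrema H a lo hi :
  cont_on_strip H -> coercive H -> quasiconvex H ->
  (forall s b p, 0 <= s <= 1 -> (interior (fun q => H s q <= b) p <-> H s p < b)) ->
  (forall s, 0 <= s <= 1 -> is_max_of (fun p => H s p = a) (hi s)) ->
  (forall s, 0 <= s <= 1 -> is_min_of (fun p => H s p = a) (lo s)) ->
  sublevel_interval H a lo hi.
Proof.
  intros Hc Hco Hq Hint Hhi Hlo s Hs.
  destruct (Hhi s Hs) as [Ehi Mhi]. destruct (Hlo s Hs) as [Elo Mlo].
  assert (Hle : forall p, H s p <= a <-> lo s <= p <= hi s).
  { intro p; split.
    - intro Hp. split.
      + destruct (exists_level_above (Hrefl H) s a (- p) (cont_on_strip_refl H Hc)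
          (coercive_refl H Hco) Hs ltac:(unfold Hrefl; rewrite Ropp_involutive; exact Hp))
          as [q [Hpq Eq]].
        specialize (Mlo (- q) Eq). lra.
      + destruct (exists_level_above H s a p Hc Hco Hs Hp) as [q [Hpq Eq]].
        specialize (Mhi q Eq). lra.
    - intro Hp. apply (quasiconvex_between H s a (lo s) (hi s) p Hq Hs); lra. }
  do 3 (split; [assumption|]). intro p; split.
  - intro Hp. apply (Hint s a p Hs) in Hp. destruct Hp as [[d Hd] Hin].
    unfold included, disc in Hin; simpl in Hin.
    assert (A1 := Hin (p + d / 2) ltac:(unfold_Rabs; lra)).
    assert (A2 := Hin (p - d / 2) ltac:(unfold_Rabs; lra)).
    apply Hle in A1. apply Hle in A2. lra.
  - intro Hp. apply (Hint s a p Hs).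
    exists (mkposreal _ (Rmin_pos (p - lo s) (hi s - p) ltac:(lra) ltac:(lra))).
    intros y Hy. unfold disc in Hy; simpl in Hy.
    apply Hle. unfold_Rmin_Rmax; unfold_Rabs; lra.
Qed.

Section SublevelContinuity.

Variables (H : R -> R -> R) (a : R) (lo hi : R -> R).

(* If [hi] jumped up near [s0], quasiconvexity at a level [c] slightly above [a]
   would keep [H s (hi s0 + eps) <= c], against continuity in [s]. *)
Lemma hi_usc s0 eps : cont_on_strip H -> quasiconvex H -> sublevel_interval H a lo hi ->
  0 <= s0 <= 1 -> 0 < eps ->
  exists d, 0 < d /\ forall s, 0 <= s <= 1 -> Rabs (s - s0) < d -> hi s < hi s0 + eps.
Proof.
  intros Hc Hq Hsl Hs0 Heps. destruct (Hsl s0 Hs0) as [_ [Ehi [Hle _]]].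
  assert (Hgt : a < H s0 (hi s0 + eps)).
  { destruct (Rlt_le_dec a (H s0 (hi s0 + eps))) as [|Hl]; [assumption|].
    apply Hle in Hl. lra. }
  set (c := (a + H s0 (hi s0 + eps)) / 2).
  assert (Hc1 : a < c) by (unfold c; lra). assert (Hc2 : c < H s0 (hi s0 + eps)) by (unfold c; lra).
  destruct (cont_on_strip_slice_s H (hi s0) s0 (c - a) Hc Hs0 ltac:(lra)) as [d1 [Hd1 N1]].
  destruct (cont_on_strip_slice_s H (hi s0 + eps) s0 (H s0 (hi s0 + eps) - c) Hc Hs0
    ltac:(lra)) as [d2 [Hd2 N2]].
  exists (Rmin d1 d2); split; [now apply Rmin_pos|].
  intros s Hs Hss. destruct (Rlt_le_dec (hi s) (hi s0 + eps)) as [|Hge]; [assumption|]. exfalso.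
  specialize (N1 s Hs ltac:(pose proof (Rmin_l d1 d2); lra)).
  specialize (N2 s Hs ltac:(pose proof (Rmin_r d1 d2); lra)).
  destruct (Hsl s Hs) as [_ [Ehis _]].
  assert (H s (hi s0 + eps) <= c).
  { apply (quasiconvex_between H s c (hi s0) (hi s)); [exact Hq|exact Hs| |lra|lra].
    unfold_Rabs; lra. }
  unfold_Rabs; lra.
Qed.

End SublevelContinuity.

Lemma lo_lsc H a lo hi s0 eps : cont_on_strip H -> quasiconvex H ->
  sublevel_interval H a lo hi -> 0 <= s0 <= 1 -> 0 < eps ->
  exists d, 0 < d /\ forall s, 0 <= s <= 1 -> Rabs (s - s0) < d -> lo s0 - eps < lo s.
Proof.
  intros Hc Hq Hsl Hs0 Heps.
  destruct (hi_usc (Hrefl H) a _ _ s0 eps (cont_on_strip_refl H Hc) (quasiconvex_refl H Hq)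
    (sublevel_interval_refl H a lo hi Hsl) Hs0 Heps) as [d [Hd Hnear]].
  exists d; split; [exact Hd|]. intros s Hs Hss. specialize (Hnear s Hs Hss). lra.
Qed.

Lemma hi_lsc H a lo hi s0 eps : cont_on_strip H -> quasiconvex H ->
  sublevel_interval H a lo hi -> 0 <= s0 <= 1 -> 0 < eps ->
  exists d, 0 < d /\ forall s, 0 <= s <= 1 -> Rabs (s - s0) < d -> hi s0 - eps < hi s.
Proof.
  intros Hc Hq Hsl Hs0 Heps. destruct (Hsl s0 Hs0) as [_ [_ [Hle Hlt]]].
  pose proof (sublevel_interval_lo_le_hi H a lo hi s0 Hsl Hs0).
  destruct (Req_dec (lo s0) (hi s0)) as [Eq|Ne].
  - destruct (lo_lsc H a lo hi s0 eps Hc Hq Hsl Hs0 Heps) as [d [Hd Hnear]].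
    exists d; split; [exact Hd|]. intros s Hs Hss. specialize (Hnear s Hs Hss).
    pose proof (sublevel_interval_lo_le_hi H a lo hi s Hsl Hs). lra.
  - set (q := Rmax ((lo s0 + hi s0) / 2) (hi s0 - eps / 2)).
    assert (Hq0 : (lo s0 + hi s0) / 2 <= q /\ hi s0 - eps / 2 <= q /\ q < hi s0)
      by (unfold q; unfold_Rmin_Rmax; lra).
    assert (HHq : H s0 q < a) by (apply Hlt; lra).
    destruct (cont_on_strip_slice_s H q s0 (a - H s0 q) Hc Hs0 ltac:(lra)) as [d [Hd Hnear]].
    exists d; split; [exact Hd|]. intros s Hs Hss. specialize (Hnear s Hs Hss).
    destruct (Hsl s Hs) as [_ [_ [_ Hlts]]].
    assert (Hin : lo s < q < hi s) by (apply Hlts; unfold_Rabs; lra). lra.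
Qed.

Lemma cont_on01_hi H a lo hi : cont_on_strip H -> quasiconvex H ->
  sublevel_interval H a lo hi -> cont_on01 hi.
Proof.
  intros Hc Hq Hsl s0 Hs0 eps Heps.
  destruct (hi_usc H a lo hi s0 eps Hc Hq Hsl Hs0 Heps) as [d1 [Hd1 N1]].
  destruct (hi_lsc H a lo hi s0 eps Hc Hq Hsl Hs0 Heps) as [d2 [Hd2 N2]].
  exists (Rmin d1 d2); split; [now apply Rmin_pos|]. intros s Hs Hss.
  specialize (N1 s Hs ltac:(pose proof (Rmin_l d1 d2); lra)).
  specialize (N2 s Hs ltac:(pose proof (Rmin_r d1 d2); lra)). unfold_Rabs; lra.
Qed.

Lemma cont_on01_lo H a lo hi : cont_on_strip H -> quasiconvex H ->
  sublevel_interval H a lo hi -> cont_on01 lo.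
Proof.
  intros Hc Hq Hsl s0 Hs0 eps Heps.
  destruct (cont_on01_hi (Hrefl H) a _ _ (cont_on_strip_refl H Hc) (quasiconvex_refl H Hq)
    (sublevel_interval_refl H a lo hi Hsl) s0 Hs0 eps Heps) as [d [Hd Hnear]].
  exists d; split; [exact Hd|]. intros s Hs Hss. specialize (Hnear s Hs Hss).
  replace (lo s - lo s0) with (- (- lo s - - lo s0)) by ring. now rewrite Rabs_Ropp.
Qed.

Lemma sublevel_interval_ext01 H a lo hi x p : sublevel_interval H a lo hi -> 0 < x < 1 ->
  (H x p <= a <-> ext01 lo x <= p <= ext01 hi x) /\ (H x p < a <-> ext01 lo x < p < ext01 hi x).
Proof.
  intros Hsl Hx. rewrite !ext01_eq by lra.
  destruct (Hsl x ltac:(lra)) as [_ [_ [Hle Hlt]]]. auto.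
Qed.

Lemma sublevel_interval_strict_or_degenerate H a lo hi mH aH :
  sublevel_interval H a lo hi ->
  (forall s, 0 <= s <= 1 -> is_min_value (H s) (mH s)) -> is_max_on01 mH aH -> aH <= a ->
  (a = aH -> forall s t, 0 <= s <= 1 -> 0 <= t <= 1 -> mH s = mH t) ->
  (forall s, 0 <= s <= 1 -> lo s < hi s) \/ (forall s, 0 <= s <= 1 -> lo s = hi s).
Proof.
  intros Hsl HmH [[s1 [Hs1 Es1]] Hmax] Ha Hconst.
  destruct (Req_dec a aH) as [Eq|Ne].
  - right. intros s Hs. pose proof (sublevel_interval_lo_le_hi H a lo hi s Hsl Hs).
    destruct (Req_dec (lo s) (hi s)) as [|Hne]; [assumption|]. exfalso.
    destruct (Hsl s Hs) as [_ [_ [_ Hlt]]].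
    assert (Hmid : H s ((lo s + hi s) / 2) < a) by (apply Hlt; lra).
    destruct (HmH s Hs) as [_ Hmin]. specialize (Hmin ((lo s + hi s) / 2)).
    pose proof (Hconst Eq s s1 Hs Hs1). lra.
  - left. intros s Hs. destruct (HmH s Hs) as [[p Ep] _]. specialize (Hmax s Hs).
    destruct (Hsl s Hs) as [_ [_ [_ Hlt]]].
    assert (Hp : lo s < p < hi s) by (apply Hlt; lra). lra.
Qed.

Lemma ex_RInt_continuity f a b : continuity f -> ex_RInt f a b.
Proof.
  intros Hf. apply (@ex_RInt_continuous R_CompleteNormedModule).
  intros z _. now apply continuity_pt_filterlim.
Qed.

Lemma derivable_pt_lim_RInt f x : continuity f ->
  derivable_pt_lim (fun y => RInt f 0 y) x (f x).
Proof.
  intros Hf. apply is_derive_Reals.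
  apply (is_derive_RInt f (fun y => RInt f 0 y) 0 x).
  - apply filter_forall. intro y. apply (@RInt_correct R_CompleteNormedModule).
    now apply ex_RInt_continuity.
  - now apply continuity_pt_filterlim.
Qed.

Lemma RInt_point_R f x : RInt f x x = 0.
Proof. now rewrite RInt_point. Qed.

Lemma RInt_via_0 f x y : continuity f -> RInt f x y = RInt f 0 y - RInt f 0 x.
Proof.
  intros Hf.
  pose proof (RInt_Chasles f 0 x y (ex_RInt_continuity f 0 x Hf)
    (ex_RInt_continuity f x y Hf)) as E.
  simpl in E. unfold plus in E; simpl in E. lra.
Qed.

Lemma Rint_eq_RInt f g a b : continuity g -> a <= b ->
  (forall x, a <= x <= b -> f x = g x) -> Rint f a b = RInt g a b.
Proof.
  intros Hg Hab Hfg.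
  assert (Hext : forall x, Rmin a b <= x <= Rmax a b -> g x = f x).
  { intros x Hx. rewrite Rmin_left, Rmax_right in Hx by lra. symmetry. now apply Hfg. }
  assert (Hex : ex_RInt f a b).
  { apply (ex_RInt_ext g); [intros x Hx; apply Hext; lra|now apply ex_RInt_continuity]. }
  rewrite (RInt_ext g f a b) by (intros x Hx; apply Hext; lra).
  unfold Rint. destruct excluded_middle_informative as [h|h].
  - symmetry. apply RInt_Reals.
  - exfalso. apply h. constructor. now apply ex_RInt_Reals_0.
Qed.

Lemma Rint_ext01 f x y : cont_on01 f -> 0 <= x -> x <= y -> y <= 1 ->
  Rint f x y = RInt (ext01 f) x y.
Proof.
  intros Hf Hx Hxy Hy. apply Rint_eq_RInt; [now apply continuity_ext01|exact Hxy|].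
  intros t Ht. symmetry. apply ext01_eq. lra.
Qed.

Lemma derivable_pt_lim_RInt_to_1 c f x : continuity f ->
  derivable_pt_lim (fun y => c - RInt f y 1) x (f x).
Proof.
  intros Hf. apply is_derive_Reals.
  apply (is_derive_ext (fun y => (c - RInt f 0 1) + RInt f 0 y)).
  - intro t. cbv beta. rewrite (RInt_via_0 f t 1 Hf). lra.
  - apply is_derive_Reals, derivable_pt_lim_const_plus, derivable_pt_lim_RInt, Hf.
Qed.

Lemma RInt_barriers_gap lo hi alpha beta : continuity lo -> continuity hi ->
  (forall t, lo t <= hi t) -> forall x y, x <= y ->
  (beta - RInt lo y 1) - (beta - RInt lo x 1) <= (alpha + RInt hi 0 y) - (alpha + RInt hi 0 x).
Proof.
  intros Hlo Hhi Hlohi x y Hxy.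
  pose proof (RInt_le lo hi x y Hxy (ex_RInt_continuity lo x y Hlo)
    (ex_RInt_continuity hi x y Hhi) (fun t _ => Hlohi t)) as Hgap.
  rewrite (RInt_via_0 lo x y), (RInt_via_0 hi x y) in Hgap by assumption.
  rewrite (RInt_via_0 lo y 1), (RInt_via_0 lo x 1) by assumption. lra.
Qed.

Lemma visc_sol_eq_on_open01 H a u v : (forall x, 0 < x < 1 -> u x = v x) ->
  visc_sol H a u -> visc_sol H a v.
Proof.
  intros Huv [Hc [Hsub Hsup]]. split; [|split].
  - intros x Hx. apply (continuity_pt_locally_ext u v (Rmin x (1 - x))).
    + apply Rmin_pos; lra.
    + intros y Hy. unfold Rdist in Hy. apply Huv.
      pose proof (Rmin_l x (1 - x)). pose proof (Rmin_r x (1 - x)). unfold_Rabs; lra.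
    + now apply Hc.
  - intros x phi dphi Hx Hphi [d [Hd Hloc]]. apply (Hsub x phi dphi Hx Hphi).
    exists d; split; [exact Hd|]. intros y Hy Hyx. rewrite !Huv by assumption. now apply Hloc.
  - intros x phi dphi Hx Hphi [d [Hd Hloc]]. apply (Hsup x phi dphi Hx Hphi).
    exists d; split; [exact Hd|]. intros y Hy Hyx. rewrite !Huv by assumption. now apply Hloc.
Qed.

Theorem proposition5p2
  (H : R -> R -> R)
  (Hcont : cont_on_strip H)
  (Hcoer : coercive H)
  (Hqc : quasiconvex H)
  (Hint : forall s b p, 0 <= s <= 1 ->
            (interior (fun q => H s q <= b) p <-> H s p < b))
  (mH : R -> R)
  (HmH : forall s, 0 <= s <= 1 -> is_min_value (H s) (mH s))
  (aH : R) (HaH : is_max_on01 mH aH)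
  (a : R) (Ha : aH <= a)
  (Hconst : a = aH -> forall s t, 0 <= s <= 1 -> 0 <= t <= 1 -> mH s = mH t)
  (sigp sigm : R -> R)
  (Hsigp : forall s, 0 <= s <= 1 -> is_max_of (fun p => H s p = a) (sigp s))
  (Hsigm : forall s, 0 <= s <= 1 -> is_min_of (fun p => H s p = a) (sigm s))
  (alpha beta : R)
  (Hab1 : Rint sigm 0 1 <= beta - alpha)
  (Hab2 : beta - alpha <= Rint sigp 0 1) :
  let w := fun s => Rmin (alpha + Rint sigp 0 s) (beta - Rint sigm s 1) in
  (cont_on01 w /\ visc_sol H a w /\ w 0 = alpha /\ w 1 = beta) /\
  (forall u : R -> R,
     cont_on01 u -> visc_sol H a u -> u 0 = alpha -> u 1 = beta ->
     forall s, 0 <= s <= 1 -> u s = w s).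
Proof.
  intros w.
  pose proof (sublevel_interval_of_level_extrema H a sigm sigp Hcont Hcoer Hqc Hint Hsigp Hsigm)
    as Hsl.
  pose proof (cont_on01_lo H a sigm sigp Hcont Hqc Hsl) as Hsigm_cont.
  pose proof (cont_on01_hi H a sigm sigp Hcont Hqc Hsl) as Hsigp_cont.
  rewrite Rint_ext01 in Hab1, Hab2 by (auto; lra).
  set (lo := ext01 sigm) in *. set (hi := ext01 sigp) in *.
  assert (Hlo : continuity lo) by now apply continuity_ext01.
  assert (Hhi : continuity hi) by now apply continuity_ext01.
  set (f := fun s => alpha + RInt hi 0 s). set (g := fun s => beta - RInt lo s 1).
  assert (Hf : forall x, derivable_pt_lim f x (hi x))
    by (intro x; apply derivable_pt_lim_const_plus, derivable_pt_lim_RInt, Hhi).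
  assert (Hg : forall x, derivable_pt_lim g x (lo x))
    by (intro x; apply derivable_pt_lim_RInt_to_1, Hlo).
  pose proof (fun x p Hx => proj1 (sublevel_interval_ext01 H a sigm sigp x p Hsl Hx)) as Hle.
  pose proof (fun x p Hx => proj2 (sublevel_interval_ext01 H a sigm sigp x p Hsl Hx)) as Hlt.
  assert (Hw : forall s, 0 <= s <= 1 -> w s = Rmin (f s) (g s))
    by (intros s Hs; unfold w, f, g; rewrite !Rint_ext01 by (auto; lra); reflexivity).
  split; [split; [|split; [|split]]|].
  - apply (cont_on01_of_continuity w (fun s => Rmin (f s) (g s))); [|exact Hw].
    apply continuity_Rmin; eapply continuity_of_derivable_pt_lim; eauto.
  - apply (visc_sol_eq_on_open01 H a (fun s => Rmin (f s) (g s)));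
      [intros; symmetry; apply Hw; lra|].
    apply (min_barriers_visc_sol H a lo hi f g Hf Hg Hle Hlt), RInt_barriers_gap; auto.
    intro t. apply (sublevel_interval_lo_le_hi H a _ _ _ Hsl), clamp01_in.
  - rewrite Hw by lra. unfold f, g. rewrite RInt_point_R, Rplus_0_r, Rmin_left; lra.
  - rewrite Hw by lra. unfold f, g. rewrite RInt_point_R, Rminus_0_r, Rmin_right; lra.
  - intros u Hu Husol Hu0 Hu1 s Hs. rewrite Hw by exact Hs.
    apply (visc_sol_eq_min_barriers H a lo hi f g Hf Hg Hle Hlt Hlo Hhi u); try assumption;
      [|unfold f; rewrite RInt_point_R; lra|unfold g; rewrite RInt_point_R; lra].
    destruct (sublevel_interval_strict_or_degenerate H a sigm sigp mH aH Hsl HmH HaH Ha Hconst)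
      as [Hcase|Hcase]; [left|right]; intros x Hx; unfold lo, hi; rewrite !ext01_eq by lra;
      apply Hcase; lra.
Qed.
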